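(* Let $(X,d)$ be a metric space and $\mu\colon X^3\to X$ a ternary operation. Then $\mu$ satisfies conditions (C1) and (C2) below if and only if it satisfies conditions (C0)', (C1)' and (C2)' below. (C1): There is an affine function $\rho(t)=Kt+H_0$ such that for all $a,b,c,a',b',c'\in X$, $d(\mu(a,b,c),\mu(a',b',c'))\leqslant \rho(d(a,a')+d(b,b')+d(c,c'))$. (C2): There is a function $H\colon\mathbb N\to[0,\infty)$ such that for every finite subset $A\subseteq X$ with $1\leqslant |A|\leqslant p$ there exist a finite median algebra $(\Pi,\mu_\Pi)$ and maps $\pi\colon A\to\Pi$, $\lambda\colon\Pi\to X$ such that for all $x,y,z\in\Pi$ and $a\in A$: $d(\lambda\mu_\Pi(x,y,z),\mu(\lambda x,\lambda y,\lambda z))\leqslant H(p)$ and $d(\lambda\pi a,a)\leqslant H(p)$. (C0)': There is a constant $\kappa_0$ such that for all $a_1,a_2,a_3\in X$, $d(\mu(a_1,a_1,a_2),a_1)\leqslant\kappa_0$, and $d(\mu(a_{\sigma(1)},a_{\sigma(2)},a_{\sigma(3)}),\mu(a_1,a_2,a_3))\leqslant\kappa_0$ for every permutation $\sigma$ of $\{1,2,3\}$. (C1)': There is an affine function $\rho\colon[0,\infty)\to[0,\infty)$ such that for all $a,a',b,c\in X$, $d(\mu(a,b,c),\mu(a',b,c))\leqslant\rho(d(a,a'))$. (C2)': There is a constant $\kappa_4>0$ such that for all $a,b,c,d\in X$, $d\big(\mu(\mu(a,b,c),b,d),\,\mu(a,b,\mu(c,b,d))\big)\leqslant\kappa_4$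.
   Context: A median algebra is a set $Y$ with a ternary operation $m$ satisfying: $m(a,a,b)=a$; $m(a_1,a_2,a_3)$ is invariant under permutations of its arguments; and $m(m(a,b,c),b,d)=m(a,b,m(c,b,d))$ for all $a,b,c,d\in Y$. *)

From Stdlib Require Import Reals List.
Open Scope R_scope.

Record is_metric {X : Type} (d : X -> X -> R) : Prop := {
  metric_nonneg : forall x y, 0 <= d x y;
  metric_sep : forall x y, d x y = 0 <-> x = y;
  metric_sym : forall x y, d x y = d y x;
  metric_tri : forall x y z, d x z <= d x y + d y z
}.

Definition is_median_algebra {Y : Type} (m : Y -> Y -> Y -> Y) : Prop :=
  (forall a b, m a a b = a) /\
  (forall a1 a2 a3, m a1 a2 a3 = m a2 a1 a3 /\ m a1 a2 a3 = m a1 a3 a2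
                    /\ m a1 a2 a3 = m a3 a2 a1) /\
  (forall a b c d, m (m a b c) b d = m a b (m c b d)).

Definition is_finite_type (Y : Type) : Prop := exists l : list Y, forall y, In y l.

Inductive idx3 : Type := i1 | i2 | i3.
Definition is_perm3 (s : idx3 -> idx3) : Prop :=
  exists s' : idx3 -> idx3, (forall i, s' (s i) = i) /\ (forall i, s (s' i) = i).

Definition cond_C1 {X : Type} (d : X -> X -> R) (mu : X -> X -> X -> X) : Prop :=
  exists K H0 : R, forall a b c a' b' c',
    d (mu a b c) (mu a' b' c') <= K * (d a a' + d b b' + d c c') + H0.

(* A finite subset A of X with 1 <= |A| <= p is a duplicate-free list. *)
Definition cond_C2 {X : Type} (d : X -> X -> R) (mu : X -> X -> X -> X) : Prop :=
  exists H : nat -> R, (forall p, 0 <= H p) /\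
  forall (p : nat) (A : list X), NoDup A -> (1 <= length A <= p)%nat ->
    exists (Pi : Type) (muPi : Pi -> Pi -> Pi -> Pi),
      is_finite_type Pi /\ is_median_algebra muPi /\
      exists (pi : {a : X | In a A} -> Pi) (lam : Pi -> X),
        (forall x y z : Pi, d (lam (muPi x y z)) (mu (lam x) (lam y) (lam z)) <= H p) /\
        (forall a : {a : X | In a A}, d (lam (pi a)) (proj1_sig a) <= H p).

Definition cond_C0' {X : Type} (d : X -> X -> R) (mu : X -> X -> X -> X) : Prop :=
  exists k0 : R, forall a : idx3 -> X,
    d (mu (a i1) (a i1) (a i2)) (a i1) <= k0 /\
    forall s, is_perm3 s ->
      d (mu (a (s i1)) (a (s i2)) (a (s i3))) (mu (a i1) (a i2) (a i3)) <= k0.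

(* affine rho : [0,oo) -> [0,oo), rho t = K t + H0, means K >= 0 and H0 >= 0 *)
Definition cond_C1' {X : Type} (d : X -> X -> R) (mu : X -> X -> X -> X) : Prop :=
  exists K H0 : R, 0 <= K /\ 0 <= H0 /\ forall a a' b c,
    d (mu a b c) (mu a' b c) <= K * d a a' + H0.

Definition cond_C2' {X : Type} (d : X -> X -> R) (mu : X -> X -> X -> X) : Prop :=
  exists k4 : R, 0 < k4 /\ forall a b c e,
    d (mu (mu a b c) b e) (mu a b (mu c b e)) <= k4.

From Stdlib Require Import Reals List Lia Lra Classical ClassicalEpsilon FunctionalExtensionality PropExtensionality ProofIrrelevance.
Import ListNotations.

(* (C1) and (C2) imply the primed conditions: each primed condition involves at most four
   points, which (C2) shadows by a finite median algebra where the median identities hold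
   exactly; (C1) transports these identities back to X, losing a bounded amount per median.

   Conversely, (C0)' and (C1)' give (C1) by moving one argument at a time.  For (C2), consider
   median terms in n variables, identified when they are uniformly close, i.e. at bounded
   distance under every assignment of points of X to the variables.  By (C0)', (C1)' and (C2)'
   these classes form a median algebra generated by the variables, hence a finite one.  Given A,
   evaluating representatives at an enumeration of A gives lambda, and the finitely many
   errors involved are bounded independently of A.

   A median algebra generated by a finite g is finite: fixing a base point o turns m(x,o,y)
   into a meet, and every generated e is determined by which meets of non-empty subsets of g lie
   below it.  This is proved by induction on e, through the distributive law
   m(m(a,b,c),d,e) = m(m(a,d,e),b,m(c,d,e)). *)

Fixpoint bool_lists (k : nat) : list (list bool) :=
  match k with
  | 0 => [[]]
  | S k => map (cons true) (bool_lists k) ++ map (cons false) (bool_lists k)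
  end.

Lemma bool_lists_complete c : In c (bool_lists (length c)).
Proof.
  induction c as [|b c IH]; simpl; [left; reflexivity|].
  apply in_or_app. destruct b; [left | right]; apply in_map; exact IH.
Qed.

Lemma finite_of_bool_code {A : Type} (P : A -> Prop) (code : A -> list bool) (k : nat) :
  (forall x, length (code x) = k) ->
  (forall x y, P x -> P y -> code x = code y -> x = y) ->
  exists l, forall x, P x -> In x l.
Proof.
  intros Hk Hinj.
  exists (flat_map (fun c =>
    match excluded_middle_informative (exists x, P x /\ code x = c) with
    | left H => [proj1_sig (constructive_indefinite_description _ H)]
    | right _ => []
    end) (bool_lists k)).
  intros x Hx. apply in_flat_map. exists (code x). split; [rewrite <- (Hk x); apply bool_lists_complete|].
  destruct (excluded_middle_informative _) as [H | H].
  - destruct (constructive_indefinite_description _ H) as [y [Hy Hc]]. left. exact (Hinj y x Hy Hx Hc).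
  - exfalso. apply H. exists x. split; [exact Hx | reflexivity].
Qed.

Fixpoint sublists {A : Type} (l : list A) : list (list A) :=
  match l with
  | [] => [[]]
  | x :: l' => sublists l' ++ map (cons x) (sublists l')
  end.

Lemma sublists_complete {A : Type} (g : list A) (S : A -> Prop) :
  exists L, In L (sublists g) /\ forall y, In y L <-> In y g /\ S y.
Proof.
  induction g as [|x g [L [HL HLS]]].
  - exists []. split; [left; reflexivity | simpl; tauto].
  - destruct (classic (S x)) as [Sx | nSx].
    + exists (x :: L). split; [apply in_or_app; right; apply in_map; exact HL|].
      intros y. simpl. rewrite HLS. split; [intros [<- | ?]; tauto | intros [[<- | ?] ?]; tauto].
    + exists L. split; [apply in_or_app; left; exact HL|].
      intros y. simpl. rewrite HLS. split; [tauto | intros [[<- | ?] ?]; tauto].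
Qed.

Section MedianAlgebra.
Variables (M : Type) (m : M -> M -> M -> M).
Hypothesis Hm : is_median_algebra m.

Lemma med_idem a b : m a a b = a.
Proof. exact (proj1 Hm a b). Qed.
Lemma med_bac a b c : m a b c = m b a c.
Proof. exact (proj1 (proj1 (proj2 Hm) a b c)). Qed.
Lemma med_acb a b c : m a b c = m a c b.
Proof. exact (proj1 (proj2 (proj1 (proj2 Hm) a b c))). Qed.
Lemma med_cba a b c : m a b c = m c b a.
Proof. exact (proj2 (proj2 (proj1 (proj2 Hm) a b c))). Qed.
Lemma med_bca a b c : m a b c = m b c a.
Proof. rewrite med_bac, med_acb. reflexivity. Qed.
Lemma med_cab a b c : m a b c = m c a b.
Proof. rewrite med_cba, med_acb. reflexivity. Qed.
Lemma med_assoc a b c d : m (m a b c) b d = m a b (m c b d).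
Proof. exact (proj2 (proj2 Hm) a b c d). Qed.

Lemma med_idem_mid a b : m a b a = a.
Proof. rewrite med_acb. apply med_idem. Qed.
Lemma med_idem_r a b : m b a a = a.
Proof. rewrite med_bca. apply med_idem. Qed.

(* Closes equations between median terms that agree up to permuting arguments at every node. *)
Local Ltac med_ac :=
  first
  [ reflexivity
  | lazymatch goal with
    | |- m ?a ?b ?c = _ =>
        first [ apply f_equal3; med_ac
              | etransitivity; [apply (med_bac a b c)|]; apply f_equal3; med_ac
              | etransitivity; [apply (med_acb a b c)|]; apply f_equal3; med_ac
              | etransitivity; [apply (med_cba a b c)|]; apply f_equal3; med_ac
              | etransitivity; [apply (med_bca a b c)|]; apply f_equal3; med_ac
              | etransitivity; [apply (med_cab a b c)|]; apply f_equal3; med_ac ]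
    end ].

Lemma med_exchange b x y z : m x b (m y b z) = m y b (m x b z).
Proof. rewrite <- !med_assoc, (med_cba x b y). reflexivity. Qed.

Lemma med_perm3 (y : idx3 -> M) (s : idx3 -> idx3) :
  is_perm3 s -> m (y (s i1)) (y (s i2)) (y (s i3)) = m (y i1) (y i2) (y i3).
Proof.
  intros [s' [Hs _]].
  pose proof (Hs i1). pose proof (Hs i2). pose proof (Hs i3).
  destruct (s i1), (s i2), (s i3); try congruence; med_ac.
Qed.

(* [between a x b]: [x] lies in the interval [a, b].  [le_at o x y]: [x <= y] in the meet
   semilattice based at [o], whose meet is [m x o y]. *)
Local Notation between a x b := (m a x b = x).
Local Notation le_at o x y := (m x o y = x).

Lemma med_between a b c : between a (m a b c) b.
Proof. rewrite med_acb, <- med_assoc, med_idem_mid. reflexivity. Qed.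
Lemma med_between_ac a b c : between a (m a b c) c.
Proof. rewrite (med_acb a b c). apply med_between. Qed.
Lemma med_between_bc a b c : between b (m a b c) c.
Proof. rewrite (med_bca a b c). apply med_between. Qed.

Lemma le_at_refl o x : le_at o x x.
Proof. apply med_idem_mid. Qed.
Lemma le_at_trans o x y z : le_at o x y -> le_at o y z -> le_at o x z.
Proof. intros Hxy Hyz. rewrite <- Hxy at 1. rewrite med_assoc, Hyz. exact Hxy. Qed.
Lemma le_at_antisym o x y : le_at o x y -> le_at o y x -> x = y.
Proof. intros Hxy Hyx. rewrite <- Hxy, med_cba. exact Hyx. Qed.
Lemma le_at_meet o z x y : le_at o z x -> le_at o z y -> le_at o z (m x o y).
Proof. intros Hx Hy. rewrite <- med_assoc, Hx. exact Hy. Qed.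
Lemma meet_le_at_l o x y : le_at o (m x o y) x.
Proof. rewrite med_assoc, (med_cba y o x), <- med_assoc, med_idem_mid. reflexivity. Qed.
Lemma meet_le_at_r o x y : le_at o (m x o y) y.
Proof. rewrite med_assoc, med_idem_mid. reflexivity. Qed.
Lemma meet_le_at_mono o x y x' y' : le_at o x x' -> le_at o y y' -> le_at o (m x o y) (m x' o y').
Proof.
  intros Hx Hy. apply le_at_meet.
  - apply (le_at_trans _ _ x); [apply meet_le_at_l | exact Hx].
  - apply (le_at_trans _ _ y); [apply meet_le_at_r | exact Hy].
Qed.

Lemma le_at_of_between o x y : between o x y -> le_at o x y.
Proof. intros H. rewrite med_bac. exact H. Qed.
Lemma between_of_le_at o x y : le_at o x y -> between o x y.
Proof. intros H. rewrite med_bac. exact H. Qed.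

Lemma between_median_unique a b c y :
  between a y b -> between b y c -> between a y c -> y = m a b c.
Proof.
  intros Hab Hbc Hac.
  assert (Ha : le_at a y (m b a c)).
  { apply le_at_meet; apply le_at_of_between; [exact Hab | exact Hac]. }
  assert (Hc : le_at c y (m b c a)).
  { apply le_at_meet; apply le_at_of_between; rewrite med_cba; [exact Hbc | exact Hac]. }
  rewrite <- (med_bac a b c) in Ha. rewrite <- (med_bca a b c) in Hc.
  set (q := m a b c) in *.
  transitivity (m y a q); [symmetry; exact Ha|].
  transitivity (m a q (m y q c)); [rewrite <- Hc at 1; med_ac|].
  rewrite med_exchange, (med_between_ac a b c : m a q c = q). apply med_idem_r.
Qed.

(* [m w d e] is the gate of [w] in the interval [d, e]. *)
Lemma gate_between d e t w : between d t e -> between w (m w d e) t.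
Proof.
  intros Ht. set (p := m w d e).
  assert (Hp : m w p d = p) by apply med_between.
  assert (Hwt : m w d t = m t d p).
  { rewrite <- Ht at 1. rewrite (med_bac d t e), med_exchange. reflexivity. }
  transitivity (m t w (m p w d)).
  { replace (m p w d) with p by (rewrite med_bac; symmetry; exact Hp). med_ac. }
  rewrite med_exchange.
  transitivity (m p w (m w d t)); [med_ac|]. rewrite Hwt.
  transitivity (m w p (m t p d)); [med_ac|].
  rewrite med_exchange, Hp. apply med_idem_r.
Qed.

Lemma meet_le_at_median o u v w : le_at o (m u o v) (m u v w).
Proof.
  set (p := m u o v). set (q := m u v w).
  assert (Hp : m u o p = p) by (rewrite med_acb; apply med_between).
  transitivity (m p o (m q o u)).
  { transitivity (m q o (m p o u)).
    { replace (m p o u) with p by (symmetry; rewrite med_cba; exact Hp). med_ac. }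
    apply med_exchange. }
  transitivity (m p o (m w u p)).
  { f_equal. transitivity (m o u (m w u v)); [unfold q; med_ac|].
    rewrite med_exchange. unfold p. med_ac. }
  transitivity (m w p (m o p u)); [rewrite <- med_exchange; med_ac|].
  replace (m o p u) with p by (symmetry; rewrite med_cab; exact Hp).
  apply med_idem_r.
Qed.

Lemma between_convex d e x y w :
  between d x e -> between d y e -> between x w y -> between d w e.
Proof.
  intros Hx Hy Hw. set (w' := m w d e).
  assert (Hx' : le_at w w' x) by (apply le_at_of_between; apply gate_between; exact Hx).
  assert (Hy' : le_at w w' y) by (apply le_at_of_between; apply gate_between; exact Hy).
  pose proof (le_at_meet w w' x y Hx' Hy') as Hxy.
  rewrite Hw, med_idem_r in Hxy.
  rewrite Hxy. apply med_between_bc.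
Qed.

Lemma gate_preserves_between d p a b c :
  between d p a -> between (m d b c) (m p b c) (m a b c).
Proof.
  intros Hp.
  set (gp := m p b c). set (gd := m d b c). set (ga := m a b c).
  assert (Hgp : between b gp c) by apply med_between_bc.
  assert (Hgd : between b gd c) by apply med_between_bc.
  assert (Hga : between b ga c) by apply med_between_bc.
  assert (Hd : le_at gp gd d).
  { pose proof (gate_between b c gp d Hgp) as H. rewrite med_cab. exact H. }
  assert (Ha : le_at gp ga a).
  { pose proof (gate_between b c gp a Hgp) as H. rewrite med_cab. exact H. }
  set (g0 := m gd gp ga).
  assert (Hg0p : le_at gp g0 p).
  { apply (le_at_trans _ _ (m d gp a)); [apply meet_le_at_mono; assumption|].
    pose proof (meet_le_at_median gp d a p) as H. rewrite (med_acb d a p), Hp in H. exact H. }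
  assert (Hg0 : between b g0 c).
  { apply (between_convex b c gd ga g0 Hgd Hga). apply med_between_ac. }
  apply (le_at_antisym p g0 gp).
  - rewrite med_acb. exact Hg0p.
  - apply le_at_of_between. apply gate_between. exact Hg0.
Qed.

Lemma gate_between_image d p a b c :
  between d p a -> between d (m p b c) (m a b c).
Proof.
  intros Hp. pose proof (gate_preserves_between d p a b c Hp) as Hpres.
  set (gp := m p b c) in *. set (gd := m d b c) in *. set (ga := m a b c) in *.
  assert (Hd : between d gd ga) by (apply gate_between; apply med_between_bc).
  rewrite med_bca. apply (le_at_trans ga gp gd d); rewrite med_cab; assumption.
Qed.

Lemma distr_between a b c d e :
  between (m a b c) (m (m a d e) b (m c d e)) d.
Proof.
  set (pa := m a d e). set (pc := m c d e). set (v := m pa b pc). set (q := m a b c).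
  assert (Hpa : between d pa a) by (unfold pa; rewrite (med_bac a d e); apply med_between).
  assert (Hpc : between d pc c) by (unfold pc; rewrite (med_bac c d e); apply med_between).
  pose proof (gate_between_image d pa a b pc Hpa) as H1.
  pose proof (gate_between_image d pc c b a Hpc) as H2.
  rewrite (med_cba pc b a), (med_cba c b a) in H2.
  rewrite med_bca. apply (le_at_trans d v (m a b pc) q); apply le_at_of_between; assumption.
Qed.

(* The right-hand side lies in the intervals [m a b c, d], [d, e] and [m a b c, e], whose only
   common point is the left-hand side. *)
Lemma med_distr a b c d e : m (m a b c) d e = m (m a d e) b (m c d e).
Proof.
  symmetry. apply between_median_unique.
  - apply distr_between.
  - apply (between_convex d e (m a d e) (m c d e)); [apply med_between_bc.. | apply med_between_ac].
  - pose proof (distr_between a b c e d) as H.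
    rewrite (med_acb a e d), (med_acb c e d) in H. exact H.
Qed.

Lemma median_le_at_of_meets o p q r z :
  le_at o (m p o q) z -> le_at o (m q o r) z -> le_at o (m p o r) z -> le_at o (m p q r) z.
Proof.
  intros Hpq Hqr Hpr.
  set (s := m p q r). set (w := m s o z).
  assert (Hgate : forall x, le_at o x z -> between s w x).
  { intros x Hx. apply gate_between. apply between_of_le_at. exact Hx. }
  change (w = m p q r). apply between_median_unique.
  - apply (between_convex p q s (m p o q)); [apply med_between | apply med_between_ac | auto].
  - apply (between_convex q r s (m q o r)); [apply med_between_bc | apply med_between_ac | auto].
  - apply (between_convex p r s (m p o r)); [apply med_between_ac | apply med_between_ac | auto].
Qed.

Lemma meet_median_le_at o u v w c z :
  le_at o (m (m u o v) o c) z -> le_at o (m (m v o w) o c) z -> le_at o (m (m u o w) o c) z ->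
  le_at o (m (m u v w) o c) z.
Proof.
  intros Huv Hvw Huw. rewrite (med_distr u v w o c).
  apply median_le_at_of_meets.
  - replace (m (m u o c) o v) with (m (m u o v) o c) by (rewrite !med_assoc; med_ac). exact Huv.
  - rewrite <- med_assoc. exact Hvw.
  - replace (m (m u o c) o (m w o c)) with (m (m u o w) o c); [exact Huw|].
    rewrite !med_assoc, (med_exchange o c w c), med_idem_mid. reflexivity.
Qed.

(* The meet of the empty list is the junk value [o], the bottom element, so lemmas about
   [meet_list] need non-empty lists. *)
Fixpoint meet_list (o : M) (l : list M) : M :=
  match l with
  | [] => o
  | x :: l' => match l' with [] => x | _ => m x o (meet_list o l') end
  end.

Lemma meet_list_cons o x l : l <> [] -> meet_list o (x :: l) = m x o (meet_list o l).
Proof. intros H. destruct l; [congruence | reflexivity]. Qed.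

Lemma meet_list_app o l1 l2 : l1 <> [] -> l2 <> [] ->
  meet_list o (l1 ++ l2) = m (meet_list o l1) o (meet_list o l2).
Proof.
  intros H1 H2. induction l1 as [|x [|y l1] IH]; [congruence | apply meet_list_cons; exact H2 |].
  rewrite <- app_comm_cons, meet_list_cons by (simpl; congruence).
  rewrite IH by discriminate. rewrite (meet_list_cons o x (y :: l1)) by discriminate.
  symmetry. apply med_assoc.
Qed.

Lemma meet_list_le_at o l x : In x l -> le_at o (meet_list o l) x.
Proof.
  induction l as [|y [|y' l] IH]; intros Hx; [destruct Hx | |].
  - destruct Hx as [<- | []]. apply le_at_refl.
  - rewrite meet_list_cons by discriminate. destruct Hx as [<- | Hx].
    + apply meet_le_at_l.
    + apply (le_at_trans _ _ (meet_list o (y' :: l))); [apply meet_le_at_r | exact (IH Hx)].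
Qed.

Lemma le_at_meet_list o l z : l <> [] -> (forall x, In x l -> le_at o z x) -> le_at o z (meet_list o l).
Proof.
  induction l as [|y [|y' l] IH]; intros Hn H; [congruence | apply H; left; reflexivity |].
  rewrite meet_list_cons by discriminate. apply le_at_meet.
  - apply H. left. reflexivity.
  - apply IH; [discriminate | intros x Hx; apply H; right; exact Hx].
Qed.

Lemma meet_list_ext o l l' : l <> [] -> l' <> [] -> (forall y, In y l <-> In y l') ->
  meet_list o l = meet_list o l'.
Proof.
  intros Hl Hl' H. apply (le_at_antisym o).
  - apply le_at_meet_list; [exact Hl' | intros x Hx; apply meet_list_le_at, H, Hx].
  - apply le_at_meet_list; [exact Hl | intros x Hx; apply meet_list_le_at, H, Hx].
Qed.

Inductive generated (g : list M) : M -> Prop :=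
| generated_base x : In x g -> generated g x
| generated_med a b c : generated g a -> generated g b -> generated g c -> generated g (m a b c).

Definition meet_below (o : M) (g : list M) (e : M) (L : list M) : Prop :=
  L <> [] /\ incl L g /\ le_at o (meet_list o L) e.

(* [m e o c] is the least upper bound of the [m (meet_list o L) o c] over the subsets [L] of [g]
   whose meet lies below [e]; quantifying over [c] lets the property pass through medians. *)
Definition join_of_meets (o : M) (g : list M) (e : M) : Prop :=
  forall c z, (forall L, meet_below o g e L -> le_at o (m (meet_list o L) o c) z) ->
  le_at o (m e o c) z.

Lemma meet_below_app o g a b c L L' :
  meet_below o g a L -> meet_below o g b L' -> meet_below o g (m a b c) (L ++ L').
Proof.
  intros [HL [HLg Ha]] [HL' [HL'g Hb]]. split; [|split].
  - destruct L; [congruence | discriminate].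
  - apply incl_app; assumption.
  - rewrite meet_list_app by assumption.
    apply (le_at_trans _ _ (m a o b)); [apply meet_le_at_mono; assumption | apply meet_le_at_median].
Qed.

Lemma join_of_meets_meet o g x y e c z :
  join_of_meets o g x -> join_of_meets o g y ->
  (forall L L', meet_below o g x L -> meet_below o g y L' -> meet_below o g e (L ++ L')) ->
  (forall L, meet_below o g e L -> le_at o (m (meet_list o L) o c) z) ->
  le_at o (m (m x o y) o c) z.
Proof.
  intros Hx Hy Happ Hz.
  rewrite !(med_assoc x o y c). apply Hx. intros L HL.
  rewrite (med_exchange o (meet_list o L) y c). apply Hy. intros L' HL'.
  rewrite (med_exchange o (meet_list o L') (meet_list o L) c), <- med_assoc.
  rewrite <- (meet_list_app o L L' (proj1 HL) (proj1 HL')).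
  apply Hz. apply Happ; assumption.
Qed.

Lemma generated_join_of_meets o g e : generated g e -> join_of_meets o g e.
Proof.
  induction 1 as [x Hx | a b c _ Ha _ Hb _ Hc].
  - intros c z Hz. apply (Hz [x]). repeat split.
    + discriminate.
    + intros y [<- | []]. exact Hx.
    + apply le_at_refl.
  - intros c' z Hz. apply meet_median_le_at.
    + apply (join_of_meets_meet o g a b (m a b c)); auto.
      intros L L' HL HL'. apply meet_below_app; assumption.
    + apply (join_of_meets_meet o g b c (m a b c)); auto.
      intros L L' HL HL'. rewrite (med_bca a b c). apply meet_below_app; assumption.
    + apply (join_of_meets_meet o g a c (m a b c)); auto.
      intros L L' HL HL'. rewrite (med_acb a b c). apply meet_below_app; assumption.
Qed.

Lemma generated_le_at o g e e' : generated g e ->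
  (forall L, meet_below o g e L -> meet_below o g e' L) -> le_at o e e'.
Proof.
  intros He H. pose proof (generated_join_of_meets o g e He e e') as Hj.
  rewrite le_at_refl in Hj. apply Hj. intros L HL.
  destruct HL as [Hn [Hg Hle]]. rewrite Hle. apply H. repeat split; assumption.
Qed.

Definition meet_code (o : M) (g : list M) (e : M) : list bool :=
  map (fun L => if excluded_middle_informative (L <> [] /\ le_at o (meet_list o L) e)
                then true else false) (sublists g).

Lemma meet_code_below o g e e' L :
  meet_code o g e = meet_code o g e' -> meet_below o g e L -> meet_below o g e' L.
Proof.
  intros Hc [Hn [Hg Hle]].
  destruct (sublists_complete g (fun y => In y L)) as [L' [HL' HL'g]].
  assert (Hmem : forall y, In y L <-> In y L') by (intros y; rewrite HL'g; split; [auto | tauto]).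
  assert (Hn' : L' <> []).
  { destruct L as [|x L]; [congruence|]. intros ->. apply (Hmem x). left. reflexivity. }
  assert (Hmeet : meet_list o L = meet_list o L') by (apply meet_list_ext; assumption).
  apply map_ext_in_iff with (a := L') in Hc; [|exact HL'].
  split; [exact Hn | split; [exact Hg|]]. rewrite Hmeet.
  destruct (excluded_middle_informative (L' <> [] /\ le_at o (meet_list o L') e)) as [_ | Hno].
  - destruct (excluded_middle_informative (L' <> [] /\ le_at o (meet_list o L') e'))
      as [[_ Hle'] | _]; [exact Hle' | discriminate].
  - exfalso. apply Hno. rewrite <- Hmeet. split; assumption.
Qed.

Theorem generated_finite (o : M) (g : list M) : exists l, forall e, generated g e -> In e l.
Proof.
  apply (finite_of_bool_code _ (meet_code o g) (length (sublists g))).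
  - intros e. apply length_map.
  - intros e e' He He' Hc. apply (le_at_antisym o); apply (generated_le_at o g); try assumption;
      intros L; apply meet_code_below; [exact Hc | symmetry; exact Hc].
Qed.

End MedianAlgebra.

Inductive term : Type :=
| Var (i : nat)
| Med (t1 t2 t3 : term).

Fixpoint eval {M : Type} (m : M -> M -> M -> M) (env : nat -> M) (t : term) : M :=
  match t with
  | Var i => env i
  | Med t1 t2 t3 => m (eval m env t1) (eval m env t2) (eval m env t3)
  end.

Fixpoint term_wf (n : nat) (t : term) : Prop :=
  match t with
  | Var i => (i < n)%nat
  | Med t1 t2 t3 => term_wf n t1 /\ term_wf n t2 /\ term_wf n t3
  end.

Lemma uniform_bound_list {T : Type} (l : list T) (P : T -> R -> Prop) :
  (forall x C C', P x C -> C <= C' -> P x C') -> (forall x, In x l -> exists C, P x C) ->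
  exists C, 0 <= C /\ forall x, In x l -> P x C.
Proof.
  intros Hmono. induction l as [|y l IH]; intros H.
  - exists 0. split; [lra | intros x []].
  - destruct IH as [C1 [HC1 H1]]; [intros x Hx; apply H; right; exact Hx|].
    destruct (H y (or_introl eq_refl)) as [C2 H2].
    exists (Rmax C1 C2). split; [apply (Rle_trans _ C1); [exact HC1 | apply Rmax_l]|].
    intros x [<- | Hx].
    + apply (Hmono _ C2); [exact H2 | apply Rmax_r].
    + apply (Hmono _ C1); [exact (H1 x Hx) | apply Rmax_l].
Qed.

Section CoarseMedian.
Variables (X : Type) (d : X -> X -> R) (mu : X -> X -> X -> X).
Hypothesis Hd : is_metric d.

Lemma d_refl x : d x x = 0.
Proof. apply (metric_sep d Hd). reflexivity. Qed.
Lemma d_sym x y : d x y = d y x.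
Proof. apply (metric_sym d Hd). Qed.
Lemma d_tri x y z : d x z <= d x y + d y z.
Proof. apply (metric_tri d Hd). Qed.
Lemma d_nonneg x y : 0 <= d x y.
Proof. apply (metric_nonneg d Hd). Qed.

Definition approximable (A : list X) (B : R) : Prop :=
  exists (Pi : Type) (muPi : Pi -> Pi -> Pi -> Pi),
    is_finite_type Pi /\ is_median_algebra muPi /\
    exists (pi : {a : X | In a A} -> Pi) (lam : Pi -> X),
      (forall x y z : Pi, d (lam (muPi x y z)) (mu (lam x) (lam y) (lam z)) <= B) /\
      (forall a : {a : X | In a A}, d (lam (pi a)) (proj1_sig a) <= B).

Lemma approximable_mono A B B' : approximable A B -> B <= B' -> approximable A B'.
Proof.
  intros (Pi & muPi & Hfin & Hmed & pi & lam & Hlam & Hpi) HB.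
  exists Pi, muPi. split; [exact Hfin | split; [exact Hmed|]]. exists pi, lam.
  split; intros; eapply Rle_trans; [apply Hlam | exact HB | apply Hpi | exact HB].
Qed.

Section FromC1C2.
Variables (K H0 : R) (H : nat -> R).
Hypothesis HC1 : forall a b c a' b' c',
  d (mu a b c) (mu a' b' c') <= K * (d a a' + d b b' + d c c') + H0.
Hypothesis HH : forall p, 0 <= H p.
Hypothesis HC2 : forall p A, NoDup A -> (1 <= length A <= p)%nat -> approximable A (H p).

Lemma mu_lipschitz_abs a b c a' b' c' r1 r2 r3 : d a a' <= r1 -> d b b' <= r2 -> d c c' <= r3 ->
  d (mu a b c) (mu a' b' c') <= Rabs K * (r1 + r2 + r3) + Rabs H0.
Proof.
  intros Ha Hb Hc.
  pose proof (d_nonneg a a'). pose proof (d_nonneg b b'). pose proof (d_nonneg c c').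
  apply (Rle_trans _ _ _ (HC1 a b c a' b' c')). apply Rplus_le_compat; [|apply RRle_abs].
  apply (Rle_trans _ (Rabs K * (d a a' + d b b' + d c c'))).
  - apply Rmult_le_compat_r; [lra | apply RRle_abs].
  - apply Rmult_le_compat_l; [apply Rabs_pos | lra].
Qed.

Lemma C1'_of_C1 : cond_C1' d mu.
Proof.
  exists (Rabs K), (Rabs H0). split; [apply Rabs_pos | split; [apply Rabs_pos|]].
  intros a a' b c. replace (Rabs K * d a a') with (Rabs K * (d a a' + 0 + 0)) by ring.
  apply mu_lipschitz_abs; [lra | rewrite d_refl; lra ..].
Qed.

Lemma approximable_small (l : list X) : l <> [] -> (length l <= 4)%nat ->
  exists (Pi : Type) (muPi : Pi -> Pi -> Pi -> Pi) (lam : Pi -> X),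
    is_median_algebra muPi /\
    (forall x y z : Pi, d (lam (muPi x y z)) (mu (lam x) (lam y) (lam z)) <= H 4) /\
    (forall a, In a l -> exists x, d a (lam x) <= H 4).
Proof.
  intros Hl Hlen.
  set (A := nodup (fun x y => excluded_middle_informative (x = y)) l).
  assert (HA : forall a, In a A <-> In a l) by apply nodup_In.
  assert (Hlen' : (1 <= length A <= 4)%nat).
  { split.
    - destruct l as [|a l]; [congruence|]. destruct A eqn:E; [|simpl; lia].
      exfalso. apply (proj2 (HA a)). left. reflexivity.
    - apply (Nat.le_trans _ (length l)); [|exact Hlen].
      apply NoDup_incl_length; [apply NoDup_nodup | intros a; apply HA]. }
  destruct (HC2 4 A (NoDup_nodup _ _) Hlen') as (Pi & muPi & _ & Hmed & pi & lam & Hlam & Hpi).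
  exists Pi, muPi, lam. split; [exact Hmed | split; [exact Hlam|]].
  intros a Ha. exists (pi (exist _ a (proj2 (HA a) Ha))).
  rewrite d_sym. exact (Hpi (exist _ a _)).
Qed.

Definition shadow_error (r : R) : R := Rabs K * (r + r + r) + Rabs H0 + H 4.

Lemma shadow_error_ge r : 0 <= r -> H 4 <= shadow_error r.
Proof.
  intros Hr. unfold shadow_error.
  assert (0 <= Rabs K * (r + r + r)) by (apply Rmult_le_pos; [apply Rabs_pos | lra]).
  pose proof (Rabs_pos H0). lra.
Qed.

Lemma shadow_med (Pi : Type) (muPi : Pi -> Pi -> Pi -> Pi) (lam : Pi -> X)
  (Hlam : forall x y z, d (lam (muPi x y z)) (mu (lam x) (lam y) (lam z)) <= H 4)
  r a b c x y z : d a (lam x) <= r -> d b (lam y) <= r -> d c (lam z) <= r ->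
  d (mu a b c) (lam (muPi x y z)) <= shadow_error r.
Proof.
  intros Ha Hb Hc. pose proof (mu_lipschitz_abs _ _ _ _ _ _ _ _ _ Ha Hb Hc) as Hmu.
  pose proof (Hlam x y z) as Hxyz. rewrite d_sym in Hxyz.
  pose proof (d_tri (mu a b c) (mu (lam x) (lam y) (lam z)) (lam (muPi x y z))).
  unfold shadow_error. lra.
Qed.

Lemma C0'_of_C1_C2 : cond_C0' d mu.
Proof.
  exists (2 * shadow_error (H 4)). intros a.
  destruct (approximable_small [a i1; a i2; a i3]) as (Pi & muPi & lam & Hmed & Hlam & Happ);
    [discriminate | simpl; lia |].
  destruct (Happ (a i1)) as [x1 H1]; [simpl; auto|].
  destruct (Happ (a i2)) as [x2 H2]; [simpl; auto|].
  destruct (Happ (a i3)) as [x3 H3]; [simpl; auto|].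
  set (x := fun i => match i with i1 => x1 | i2 => x2 | i3 => x3 end).
  assert (Hx : forall i, d (a i) (lam (x i)) <= H 4) by (intros []; assumption).
  pose proof (shadow_error_ge (H 4) (HH 4)) as Hh.
  split.
  - pose proof (shadow_med Pi muPi lam Hlam _ _ _ _ _ _ _ (Hx i1) (Hx i1) (Hx i2)) as Hs.
    simpl in Hs. rewrite (med_idem _ _ Hmed) in Hs.
    pose proof (d_tri (mu (a i1) (a i1) (a i2)) (lam x1) (a i1)) as Htri.
    rewrite (d_sym (lam x1)) in Htri. lra.
  - intros s Hs.
    pose proof (shadow_med Pi muPi lam Hlam _ _ _ _ _ _ _ (Hx (s i1)) (Hx (s i2)) (Hx (s i3))) as Hs1.
    rewrite (med_perm3 _ _ Hmed x s Hs) in Hs1.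
    pose proof (shadow_med Pi muPi lam Hlam _ _ _ _ _ _ _ (Hx i1) (Hx i2) (Hx i3)) as Hs2.
    rewrite d_sym in Hs2.
    pose proof (d_tri (mu (a (s i1)) (a (s i2)) (a (s i3)))
                         (lam (muPi (x i1) (x i2) (x i3))) (mu (a i1) (a i2) (a i3))).
    lra.
Qed.

Lemma C2'_of_C1_C2 : cond_C2' d mu.
Proof.
  pose proof (HH 4) as Hh. pose proof (shadow_error_ge (H 4) Hh) as Hhr.
  set (r := shadow_error (H 4)) in *.
  assert (Hr : H 4 <= shadow_error r) by (apply shadow_error_ge; lra).
  exists (2 * shadow_error r + 1). split; [lra|]. intros a b c e.
  destruct (approximable_small [a; b; c; e]) as (Pi & muPi & lam & Hmed & Hlam & Happ);
    [discriminate | simpl; lia |].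
  destruct (Happ a) as [xa Ha]; [simpl; auto|].
  destruct (Happ b) as [xb Hb]; [simpl; auto|].
  destruct (Happ c) as [xc Hc]; [simpl; auto|].
  destruct (Happ e) as [xe He]; [simpl; auto|].
  pose proof (shadow_med Pi muPi lam Hlam (H 4) _ _ _ _ _ _ Ha Hb Hc) as Habc.
  pose proof (shadow_med Pi muPi lam Hlam (H 4) _ _ _ _ _ _ Hc Hb He) as Hcbe.
  pose proof (shadow_med Pi muPi lam Hlam r _ _ _ _ _ _
                Habc (Rle_trans _ _ _ Hb Hhr) (Rle_trans _ _ _ He Hhr)) as Hleft.
  pose proof (shadow_med Pi muPi lam Hlam r _ _ _ _ _ _
                (Rle_trans _ _ _ Ha Hhr) (Rle_trans _ _ _ Hb Hhr) Hcbe) as Hright.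
  rewrite (med_assoc _ _ Hmed) in Hleft. rewrite d_sym in Hright.
  pose proof (d_tri (mu (mu a b c) b e) (lam (muPi xa xb (muPi xc xb xe))) (mu a b (mu c b e))).
  lra.
Qed.

End FromC1C2.

Section FromC0'C1'C2'.
Variables (k0 K H0 k4 : R).
Hypothesis Hk0 : forall a : idx3 -> X,
  d (mu (a i1) (a i1) (a i2)) (a i1) <= k0 /\
  forall s, is_perm3 s -> d (mu (a (s i1)) (a (s i2)) (a (s i3))) (mu (a i1) (a i2) (a i3)) <= k0.
Hypothesis HK : 0 <= K.
Hypothesis HL : forall a a' b c, d (mu a b c) (mu a' b c) <= K * d a a' + H0.
Hypothesis Hk4 : forall a b c e, d (mu (mu a b c) b e) (mu a b (mu c b e)) <= k4.

Definition triple (x y z : X) (i : idx3) : X := match i with i1 => x | i2 => y | i3 => z end.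

Lemma perm3_of_involution (s : idx3 -> idx3) : (forall i, s (s i) = i) -> is_perm3 s.
Proof. intros Hs. exists s. split; exact Hs. Qed.

Lemma coarse_idem x y : d (mu x x y) x <= k0.
Proof. exact (proj1 (Hk0 (triple x y x))). Qed.
Lemma coarse_bac x y z : d (mu y x z) (mu x y z) <= k0.
Proof.
  apply (proj2 (Hk0 (triple x y z)) (fun i => match i with i1 => i2 | i2 => i1 | i3 => i3 end)).
  apply perm3_of_involution. intros []; reflexivity.
Qed.
Lemma coarse_acb x y z : d (mu x z y) (mu x y z) <= k0.
Proof.
  apply (proj2 (Hk0 (triple x y z)) (fun i => match i with i1 => i1 | i2 => i3 | i3 => i2 end)).
  apply perm3_of_involution. intros []; reflexivity.
Qed.
Lemma coarse_cba x y z : d (mu z y x) (mu x y z) <= k0.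
Proof.
  apply (proj2 (Hk0 (triple x y z)) (fun i => match i with i1 => i3 | i2 => i2 | i3 => i1 end)).
  apply perm3_of_involution. intros []; reflexivity.
Qed.

(* Move one argument at a time, bringing it to the first slot by a permutation and back. *)
Lemma mu_lipschitz a b c a' b' c' :
  d (mu a b c) (mu a' b' c') <= K * (d a a' + d b b' + d c c') + (3 * H0 + 4 * k0).
Proof.
  assert (Hb : d (mu a' b c) (mu a' b' c) <= K * d b b' + H0 + 2 * k0).
  { pose proof (coarse_bac b a' c). pose proof (coarse_bac a' b' c). pose proof (HL b b' a' c).
    pose proof (d_tri (mu a' b c) (mu b a' c) (mu a' b' c)).
    pose proof (d_tri (mu b a' c) (mu b' a' c) (mu a' b' c)).
    lra. }
  assert (Hc : d (mu a' b' c) (mu a' b' c') <= K * d c c' + H0 + 2 * k0).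
  { pose proof (coarse_cba c b' a'). pose proof (coarse_cba a' b' c'). pose proof (HL c c' b' a').
    pose proof (d_tri (mu a' b' c) (mu c b' a') (mu a' b' c')).
    pose proof (d_tri (mu c b' a') (mu c' b' a') (mu a' b' c')).
    lra. }
  pose proof (HL a a' b c).
  pose proof (d_tri (mu a b c) (mu a' b c) (mu a' b' c')).
  pose proof (d_tri (mu a' b c) (mu a' b' c) (mu a' b' c')).
  lra.
Qed.

Lemma mu_lipschitz_le a b c a' b' c' r1 r2 r3 :
  d a a' <= r1 -> d b b' <= r2 -> d c c' <= r3 ->
  d (mu a b c) (mu a' b' c') <= K * (r1 + r2 + r3) + (3 * H0 + 4 * k0).
Proof.
  intros. apply (Rle_trans _ _ _ (mu_lipschitz a b c a' b' c')).
  apply Rplus_le_compat_r, Rmult_le_compat_l; [exact HK | lra].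
Qed.

Definition uclose (t s : term) : Prop :=
  exists C, forall env, d (eval mu env t) (eval mu env s) <= C.

Lemma uclose_refl t : uclose t t.
Proof. exists 0. intros env. rewrite d_refl. lra. Qed.
Lemma uclose_sym t s : uclose t s -> uclose s t.
Proof. intros [C HC]. exists C. intros env. rewrite d_sym. apply HC. Qed.
Lemma uclose_trans t s r : uclose t s -> uclose s r -> uclose t r.
Proof.
  intros [C1 H1] [C2 H2]. exists (C1 + C2). intros env.
  apply (Rle_trans _ _ _ (d_tri _ (eval mu env s) _)). apply Rplus_le_compat; auto.
Qed.
Lemma uclose_med t1 t2 t3 s1 s2 s3 :
  uclose t1 s1 -> uclose t2 s2 -> uclose t3 s3 -> uclose (Med t1 t2 t3) (Med s1 s2 s3).
Proof.
  intros [C1 H1] [C2 H2] [C3 H3]. exists (K * (C1 + C2 + C3) + (3 * H0 + 4 * k0)).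
  intros env. apply mu_lipschitz_le; auto.
Qed.
Lemma uclose_idem t s : uclose (Med t t s) t.
Proof. exists k0. intros env. apply coarse_idem. Qed.
Lemma uclose_bac t1 t2 t3 : uclose (Med t1 t2 t3) (Med t2 t1 t3).
Proof. exists k0. intros env. apply coarse_bac. Qed.
Lemma uclose_acb t1 t2 t3 : uclose (Med t1 t2 t3) (Med t1 t3 t2).
Proof. exists k0. intros env. apply coarse_acb. Qed.
Lemma uclose_cba t1 t2 t3 : uclose (Med t1 t2 t3) (Med t3 t2 t1).
Proof. exists k0. intros env. apply coarse_cba. Qed.
Lemma uclose_assoc t1 t2 t3 t4 : uclose (Med (Med t1 t2 t3) t2 t4) (Med t1 t2 (Med t3 t2 t4)).
Proof. exists k4. intros env. apply Hk4. Qed.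

Lemma uclose_ext t s : uclose t s -> uclose t = uclose s.
Proof.
  intros H. apply functional_extensionality. intros r. apply propositional_extensionality.
  split; intros H'; [apply (uclose_trans _ t) | apply (uclose_trans _ s)];
    auto using uclose_sym.
Qed.

(* Classes of terms in [n] variables up to uniform closeness, encoded by the predicates
   [uclose t]. *)
Definition qterm (n : nat) : Type := {P : term -> Prop | exists t, term_wf n t /\ P = uclose t}.

Definition qclass (n : nat) (t : term) (Ht : term_wf n t) : qterm n :=
  exist _ (uclose t) (ex_intro _ t (conj Ht eq_refl)).

Definition qrep {n : nat} (q : qterm n) : term :=
  proj1_sig (constructive_indefinite_description _ (proj2_sig q)).

Lemma qrep_spec {n} (q : qterm n) : term_wf n (qrep q) /\ proj1_sig q = uclose (qrep q).
Proof. unfold qrep. destruct (constructive_indefinite_description _ _) as [t Ht]. exact Ht. Qed.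

Lemma qterm_ext {n} (q q' : qterm n) : proj1_sig q = proj1_sig q' -> q = q'.
Proof.
  destruct q as [P HP], q' as [P' HP']. simpl. intros <-. f_equal. apply proof_irrelevance.
Qed.

Lemma qclass_eq n t s Ht Hs : uclose t s -> qclass n t Ht = qclass n s Hs.
Proof. intros H. apply qterm_ext. apply uclose_ext. exact H. Qed.

Lemma qrep_class n t Ht : uclose (qrep (qclass n t Ht)) t.
Proof.
  rewrite <- (proj2 (qrep_spec (qclass n t Ht))). apply uclose_refl.
Qed.

Lemma qterm_ind n (P : qterm n -> Prop) : (forall t Ht, P (qclass n t Ht)) -> forall q, P q.
Proof.
  intros HP q. destruct (qrep_spec q) as [Hwf Hrep].
  replace q with (qclass n (qrep q) Hwf) by (apply qterm_ext; symmetry; exact Hrep).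
  apply HP.
Qed.

Definition qmed {n : nat} (x y z : qterm n) : qterm n :=
  qclass n (Med (qrep x) (qrep y) (qrep z))
    (conj (proj1 (qrep_spec x)) (conj (proj1 (qrep_spec y)) (proj1 (qrep_spec z)))).

Lemma qmed_class n t1 t2 t3 H1 H2 H3 :
  qmed (qclass n t1 H1) (qclass n t2 H2) (qclass n t3 H3) =
  qclass n (Med t1 t2 t3) (conj H1 (conj H2 H3)).
Proof. apply qclass_eq. apply uclose_med; apply qrep_class. Qed.

Local Ltac qterm_elim :=
  repeat match goal with q : qterm _ |- _ => revert q; apply qterm_ind; intros ? ? end;
  rewrite ?qmed_class; apply qclass_eq.

Lemma qmed_median n : is_median_algebra (@qmed n).
Proof.
  split; [|split].
  - intros x y. qterm_elim. apply uclose_idem.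
  - intros x y z. split; [|split]; qterm_elim; [apply uclose_bac | apply uclose_acb | apply uclose_cba].
  - intros x y z w. qterm_elim. apply uclose_assoc.
Qed.

Section Generators.
Variable n : nat.
Hypothesis Hn : n <> 0%nat.

(* Indices [i >= n] wrap around; only [i < n] are used. *)
Definition qgen (i : nat) : qterm n := qclass n (Var (i mod n)) (Nat.mod_upper_bound i n Hn).

Lemma qrep_qgen i : (i < n)%nat -> uclose (qrep (qgen i)) (Var i).
Proof. intros Hi. rewrite <- (Nat.mod_small i n Hi) at 2. apply qrep_class. Qed.

Lemma qterm_generated q : generated _ qmed (map qgen (seq 0 n)) q.
Proof.
  revert q. apply qterm_ind. induction t as [i | t1 IH1 t2 IH2 t3 IH3]; intros Ht.
  - apply generated_base. apply in_map_iff. exists i. split.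
    + apply qclass_eq. simpl in Ht. rewrite Nat.mod_small by exact Ht. apply uclose_refl.
    + apply in_seq. simpl in Ht. lia.
  - destruct Ht as (Ht1 & Ht2 & Ht3). rewrite <- (qmed_class n t1 t2 t3 Ht1 Ht2 Ht3).
    apply generated_med; auto.
Qed.

Lemma qterm_finite : exists l, forall q : qterm n, In q l.
Proof.
  destruct (generated_finite _ qmed (qmed_median n) (qgen 0) (map qgen (seq 0 n))) as [l Hl].
  exists l. intros q. apply Hl, qterm_generated.
Qed.

Lemma approximable_of_length : exists B, 0 <= B /\ forall A, length A = n -> approximable A B.
Proof.
  destruct qterm_finite as [l Hl].
  destruct (uniform_bound_list (list_prod l (list_prod l l))
     (fun w C => forall env,
        d (eval mu env (qrep (qmed (fst w) (fst (snd w)) (snd (snd w)))))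
          (eval mu env (Med (qrep (fst w)) (qrep (fst (snd w))) (qrep (snd (snd w))))) <= C))
     as (B1 & HB1 & Hmed).
  { intros w C C' HC HCC' env. apply (Rle_trans _ C); [apply HC | exact HCC']. }
  { intros w _. apply qrep_class. }
  destruct (uniform_bound_list (seq 0 n)
     (fun i C => forall env, d (eval mu env (qrep (qgen i))) (env i) <= C)) as (B2 & HB2 & Hgen).
  { intros i C C' HC HCC' env. apply (Rle_trans _ C); [apply HC | exact HCC']. }
  { intros i Hi. apply in_seq in Hi. apply qrep_qgen. lia. }
  exists (Rmax B1 B2). split; [apply (Rle_trans _ B1); [exact HB1 | apply Rmax_l]|].
  intros [|a0 A] HA; [simpl in HA; congruence|].
  set (env := fun i => nth i (a0 :: A) a0).
  exists (qterm n), qmed. split; [exact qterm_finite | split; [apply qmed_median|]].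
  exists (fun a => qgen (proj1_sig (constructive_indefinite_description _
                     (In_nth (a0 :: A) (proj1_sig a) a0 (proj2_sig a))))),
         (fun q => eval mu env (qrep q)).
  split.
  - intros x y z. apply (Rle_trans _ B1); [|apply Rmax_l].
    apply (Hmed (x, (y, z))). apply in_prod; [apply Hl | apply in_prod; apply Hl].
  - intros a. apply (Rle_trans _ B2); [|apply Rmax_r].
    destruct (constructive_indefinite_description _ _) as [i [Hi <-]]. simpl.
    apply (Hgen i). apply in_seq. rewrite HA in Hi. lia.
Qed.

End Generators.

Lemma C2_of_C0'_C1'_C2' : cond_C2 d mu.
Proof.
  assert (HP : forall p, exists B, 0 <= B /\
            forall A, NoDup A -> (1 <= length A <= p)%nat -> approximable A B).
  { induction p as [|p (B1 & HB1 & IH)].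
    - exists 0. split; [lra | intros A _ HA; lia].
    - destruct (approximable_of_length (S p) (Nat.neq_succ_0 p)) as (B2 & HB2 & HS).
      exists (Rmax B1 B2). split; [apply (Rle_trans _ B1); [exact HB1 | apply Rmax_l]|].
      intros A HA Hlen. destruct (Nat.eq_dec (length A) (S p)) as [E | E].
      + apply (approximable_mono _ B2); [apply HS, E | apply Rmax_r].
      + apply (approximable_mono _ B1); [apply IH; [exact HA | lia] | apply Rmax_l]. }
  destruct (choice _ HP) as [H HH].
  exists H. split; intros; apply HH; assumption.
Qed.

End FromC0'C1'C2'.
End CoarseMedian.

Theorem theorem3p1 (X : Type) (d : X -> X -> R) (mu : X -> X -> X -> X) :
  is_metric d ->
  (cond_C1 d mu /\ cond_C2 d mu <-> cond_C0' d mu /\ cond_C1' d mu /\ cond_C2' d mu).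
Proof.
  intros Hd. split.
  - intros [[K [H0 HC1]] [H [HH HC2]]]. repeat split.
    + exact (C0'_of_C1_C2 X d mu Hd K H0 H HC1 HH HC2).
    + exact (C1'_of_C1 X d mu Hd K H0 HC1).
    + exact (C2'_of_C1_C2 X d mu Hd K H0 H HC1 HH HC2).
  - intros [[k0 Hk0] [[K [H0 [HK [_ HL]]]] [k4 [_ Hk4]]]]. split.
    + exists K, (3 * H0 + 4 * k0). exact (mu_lipschitz X d mu Hd k0 K H0 Hk0 HL).
    + exact (C2_of_C0'_C1'_C2' X d mu Hd k0 K H0 k4 Hk0 HK HL Hk4).
Qed.
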